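(* Let $f$ be a Boolean function over $X$ and $T$ a vtree over $X$. Then every TDD respecting $T$ and computing $f$ has, for every node $t$ of $T$, at least $S_t$ $t$-nodes, where $S_t$ is the number of distinct non-trivial $X_t$-subfunctions of $f$.
   Context: For $Y\subseteq X$ and $\tau\in 2^Y$, $f[\tau]$ is the Boolean function over $X\setminus Y$ mapping $\sigma$ to $f(\sigma\times\tau)$. The $Y$-subfunctions of $f$ are the functions $f[\tau]$ for $\tau\in 2^Y$ (distinct functions counted once); a subfunction is non-trivial if it has at least one model. A vtree over $X$ is a rooted tree whose internal nodes have exactly two ordered children and whose leaves are labeled bijectively by $X$; $X_t$ is the set of variables below node $t$. An nTDD $C=(N,E)$ respecting $T$ has nodes $N=\biguplus_t N_t$ ($t$-nodes); leaf $t$-nodes (leaf labeled $x$) carry a label in $\{x,\neg x,1,0\}$ and compute that literal/constant; an internal $t$-node $g$ with children $t_1,t_2$ has inputs $E(g)\subseteq N_{t_1}\times N_{t_2}$ and computes $f_g=\bigvee_{(g_1,g_2)\in E(g)}(f_{g_1}\wedge f_{g_2})$ over $X_t$; the distinguished root-node $\mathrm{out}$ gives $f_C=f_{\mathrm{out}}$. A TDD is an nTDD such that for every leaf $t$ labeled $x$, $N_t$ has at most one node labeled $x$, at most one labeled $\neg x$, at most one labeled $1$, and if one is labeled $1$ all others are labeled $0$; and for every internal $t$, distinct $t$-nodes have disjoint input sets. *)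

From mathcomp Require Import all_boot.
Set Implicit Arguments.
Unset Strict Implicit.
Unset Printing Implicit Defensive.

Section Defs.
Variable X : finType.

Definition assign := {ffun X -> bool}.

Definition merge (Y : {set X}) (tau sigma : assign) : assign :=
  [ffun x => if x \in Y then tau x else sigma x].

(* f[tau] for tau in 2^Y, represented as a function on full assignments
   which only looks at the variables outside Y (i.e. a function over X \ Y). *)
Definition subfun (f : assign -> bool) (Y : {set X}) (tau : assign)
  : {ffun assign -> bool} := [ffun sigma => f (merge Y tau sigma)].

Definition num_nontriv_subfun (f : assign -> bool) (Y : {set X}) : nat :=
  #|[set subfun f Y tau | tau in [pred tau : assign | [exists sigma, subfun f Y tau sigma]]]|.

Inductive vtree := VLeaf of X | VNode of vtree & vtree.

Fixpoint leaves (t : vtree) : seq X :=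
  match t with VLeaf x => [:: x] | VNode l r => leaves l ++ leaves r end.

Definition vtree_over (T : vtree) : Prop :=
  uniq (leaves T) /\ forall x : X, x \in leaves T.

Definition vars (t : vtree) : {set X} := [set x in leaves t].

(* nodes of a vtree are addressed by paths from the root (false = left child,
   true = right child); subtree T p is the subtree rooted at node p, if any *)
Fixpoint subtree (t : vtree) (p : seq bool) : option vtree :=
  match p with
  | [::] => Some t
  | b :: p' => match t with
               | VLeaf _ => None
               | VNode l r => subtree (if b then r else l) p'
               end
  end.

(* labels of leaf t-nodes: x, ~x, 1, 0 (the variable x is the leaf's label) *)
Inductive lit := LPos | LNeg | LOne | LZero.

(* raw data of a (candidate) nTDD: finite node set, the vtree node each circuit
   node belongs to, leaf labels, input sets, output node *)
Record ntdd := Ntdd {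
  node : finType;
  pos : node -> seq bool;
  lbl : node -> lit;
  inp : node -> {set node * node};
  out : node
}.

(* f_g, where t is the vtree node of g *)
Fixpoint evalAt (C : ntdd) (t : vtree) (g : node C) (sigma : assign) : bool :=
  match t with
  | VLeaf x => match lbl g with
               | LPos => sigma x
               | LNeg => ~~ sigma x
               | LOne => true
               | LZero => false
               end
  | VNode l r => [exists gg in inp g, evalAt l gg.1 sigma && evalAt r gg.2 sigma]
  end.

Definition respects (T : vtree) (C : ntdd) : Prop :=
  [/\ forall g : node C, subtree T (pos g) <> None,
      forall (g : node C) l r, subtree T (pos g) = Some (VNode l r) ->
        forall gg, gg \in inp g ->
          pos gg.1 = rcons (pos g) false /\ pos gg.2 = rcons (pos g) true
    & pos (out C) = [::]].

Definition computes (T : vtree) (C : ntdd) (f : assign -> bool) : Prop :=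
  forall sigma, evalAt T (out C) sigma = f sigma.

Definition is_tdd (T : vtree) (C : ntdd) : Prop :=
  (forall p x, subtree T p = Some (VLeaf x) ->
     (forall g h : node C, pos g = p -> pos h = p ->
        lbl g = lbl h -> lbl g <> LZero -> g = h) /\
     (forall g h : node C, pos g = p -> pos h = p ->
        lbl g = LOne -> h <> g -> lbl h = LZero)) /\
  (forall p l r, subtree T p = Some (VNode l r) ->
     forall g h : node C, pos g = p -> pos h = p -> g <> h ->
       [disjoint inp g & inp h]).

Definition tnodes (C : ntdd) (p : seq bool) : {set node C} :=
  [set g | pos g == p].

End Defs.

From Pilot Require Import Defs.
From mathcomp Require Import all_boot.
Set Implicit Arguments.
Unset Strict Implicit.
Unset Printing Implicit Defensive.

(* In a TDD an assignment satisfies at most one t-node: two satisfied t-nodes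
   would share a satisfied input pair (by induction on t), contradicting the
   disjointness of input sets.  Since f_C depends on the variables in X_t only
   through the t-node values, f[tau] is determined by the t-node satisfied by
   tau, and every non-trivial subfunction arises from some t-node this way. *)

Section Vtrees.
Variable X : finType.
Implicit Types (s t l r : vtree X) (p q : seq bool).

Lemma subtree_nil s : subtree s [::] = Some s.
Proof. by case: s. Qed.

Lemma subtree_cat s p q :
  subtree s (p ++ q) = obind (fun u => subtree u q) (subtree s p).
Proof. by elim: p s => [|b p IH] [x|sl sr] //=; rewrite subtree_nil. Qed.

Lemma subtree_rcons q s l r b : subtree s q = Some (VNode l r) ->
  subtree s (rcons q b) = Some (if b then r else l).
Proof.
by move=> sq; rewrite -cats1 subtree_cat sq; case: b; rewrite /= subtree_nil.
Qed.

Lemma leaves_subtree s t p :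
  subtree s p = Some t -> {subset leaves t <= leaves s}.
Proof.
elim: p s => [|b p IH] [x|sl sr] //=; try by case=> <-.
move=> /IH sub y /sub {sub}; rewrite mem_cat.
by case: b => ->; rewrite ?orbT.
Qed.

Lemma uniq_leaves_subtree s t p :
  subtree s p = Some t -> uniq (leaves s) -> uniq (leaves t).
Proof.
elim: p s => [|b p IH] [x|sl sr] //=; try by case=> <-.
move=> /IH uniq_t; rewrite cat_uniq => /and3P[ul _ ur].
by case: b uniq_t; apply.
Qed.

Lemma mem_vars t x : (x \in vars t) = (x \in leaves t).
Proof. by rewrite inE. Qed.

Lemma eq_evalAt (C : ntdd) s (g : node C) (a b : assign X) :
  {in leaves s, a =1 b} -> evalAt s g a = evalAt s g b.
Proof.
elim: s g => [x|l IHl r IHr] g eq_ab /=; first by rewrite eq_ab ?inE.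
apply: eq_existsb => gg; rewrite IHl ?IHr // => y y_s; apply: eq_ab;
  by rewrite mem_cat y_s ?orbT.
Qed.

Lemma merge_vars t (tau sigma : assign X) :
  {in leaves t, Defs.merge (vars t) tau sigma =1 tau}.
Proof. by move=> x x_t; rewrite ffunE mem_vars x_t. Qed.

End Vtrees.

Section TDD.
Variables (X : finType) (T : vtree X) (C : ntdd).
Implicit Types (s t l r : vtree X) (p q : seq bool) (g h : node C).
Implicit Types (a b tau sigma : assign X).

Hypothesis respTC : respects T C.

Lemma pos_out : pos (out C) = [::].
Proof. by case: respTC. Qed.

Lemma pos_inp q l r g gg : subtree T q = Some (VNode l r) -> pos g = q ->
  gg \in inp g -> pos gg.1 = rcons q false /\ pos gg.2 = rcons q true.
Proof. by case: respTC => _ inpP _ Tq gq; subst q; exact: inpP _ _ _ Tq gg. Qed.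

Lemma evalAt_descend p q s t g a :
  subtree T q = Some s -> pos g = q -> subtree s p = Some t -> evalAt s g a ->
  exists2 h : node C, pos h = q ++ p & evalAt t h a.
Proof.
elim: p q s g => [|b p IH] q s g Tq gq.
  by rewrite subtree_nil cats0 => -[<-] ga; exists g.
case: s Tq => [x|l r] Tq //= sp /existsP[gg /andP[gg_in /andP[ga1 ga2]]].
have [pos1 pos2] := pos_inp Tq gq gg_in.
rewrite -cat_rcons; case: b sp => sp.
  exact: IH (subtree_rcons true Tq) pos2 sp ga2.
exact: IH (subtree_rcons false Tq) pos1 sp ga1.
Qed.

Hypothesis uniqT : uniq (leaves T).

Lemma eq_evalAt_tnodes p q s t g a b :
  subtree T q = Some s -> pos g = q -> subtree s p = Some t ->
  (forall h, pos h = q ++ p -> evalAt t h a = evalAt t h b) ->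
  {in [predC leaves t], a =1 b} -> evalAt s g a = evalAt s g b.
Proof.
elim: p q s g => [|c p IH] q s g Tq gq.
  by rewrite subtree_nil cats0 => -[<-] ab _; apply: ab.
case: s Tq => [x|l r] Tq //= sp ab out_ab.
have: uniq (leaves (VNode l r)) := uniq_leaves_subtree Tq uniqT.
rewrite /= cat_uniq => /and3P[_ /hasPn lr_disj _].
apply: eq_existsb => gg; apply: andb_id2l => gg_in.
have [pos1 pos2] := pos_inp Tq gq gg_in.
rewrite -cat_rcons in ab; case: c sp ab => sp ab; congr andb.
- apply: eq_evalAt => y y_l; apply: out_ab.
  apply/negP => /(leaves_subtree sp) y_r.
  by have := lr_disj y y_r; rewrite /= y_l.
- exact: IH (subtree_rcons true Tq) pos2 sp ab out_ab.
- exact: IH (subtree_rcons false Tq) pos1 sp ab out_ab.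
- apply: eq_evalAt => y y_r; apply: out_ab.
  apply/negP => /(leaves_subtree sp) y_l.
  by have := lr_disj y y_r; rewrite /= y_l.
Qed.

Hypothesis tddTC : is_tdd T C.

Lemma evalAt_leaf_unique p x g h a : subtree T p = Some (VLeaf x) ->
  pos g = p -> pos h = p ->
  evalAt (VLeaf x) g a -> evalAt (VLeaf x) h a -> g = h.
Proof.
case: tddTC => + _ Tp gp hp => /(_ p x Tp)[lbl_inj one_excl] /= ga ha.
case: (eqVneq g h) => // /eqP neq_gh.
apply: (lbl_inj g h gp hp); last by move: ga; case: (lbl g).
move: (one_excl g h gp hp) (one_excl h g hp gp) ga ha.
case: (lbl g); case: (lbl h) => //= excl_gh excl_hg; try by case: (a x).
all: by [case: (excl_hg erefl neq_gh) | case: (excl_gh erefl (nesym neq_gh))].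
Qed.

Lemma evalAt_tnode_unique p t g h a : subtree T p = Some t ->
  pos g = p -> pos h = p -> evalAt t g a -> evalAt t h a -> g = h.
Proof.
elim: t p g h => [x|l IHl r IHr] p g h Tp gp hp.
  exact: evalAt_leaf_unique Tp gp hp.
case/existsP => gg /andP[gg_in /andP[ga1 ga2]].
case/existsP => hh /andP[hh_in /andP[ha1 ha2]].
have [g1 g2] := pos_inp Tp gp gg_in; have [h1 h2] := pos_inp Tp hp hh_in.
have eq_gg_hh : gg = hh.
  rewrite [gg]surjective_pairing [hh]surjective_pairing.
  by rewrite (IHl _ _ _ (subtree_rcons false Tp) g1 h1 ga1 ha1)
             (IHr _ _ _ (subtree_rcons true Tp) g2 h2 ga2 ha2).
case: (eqVneq g h) => // /eqP neq_gh.
have disj_gh := tddTC.2 p l r Tp g h gp hp neq_gh.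
by rewrite -eq_gg_hh (disjointFr disj_gh gg_in) in hh_in.
Qed.

Variable f : assign X -> bool.
Hypothesis compTCf : computes T C f.

Lemma tnode_subfun_eq p t h tau tau' : subtree T p = Some t -> pos h = p ->
  evalAt t h tau -> evalAt t h tau' ->
  subfun f (vars t) tau = subfun f (vars t) tau'.
Proof.
move=> Tp hp h_tau h_tau'; apply/ffunP => sigma; rewrite !ffunE -!compTCf.
have h_a : evalAt t h (Defs.merge (vars t) tau sigma).
  by rewrite (eq_evalAt _ (merge_vars _ _)).
have h_b : evalAt t h (Defs.merge (vars t) tau' sigma).
  by rewrite (eq_evalAt _ (merge_vars _ _)).
apply: (eq_evalAt_tnodes (subtree_nil T) pos_out Tp) => [k kp|y].
  by apply/idP/idP => k_ev; rewrite (evalAt_tnode_unique Tp kp hp k_ev).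
by rewrite inE !ffunE mem_vars => /negbTE->.
Qed.

Lemma nontriv_subfun_tnode p t tau sigma : subtree T p = Some t ->
  f (Defs.merge (vars t) tau sigma) ->
  exists2 h : node C, pos h = p & evalAt t h tau.
Proof.
move=> Tp; rewrite -compTCf => out_ev.
have [h hp h_ev] := evalAt_descend (subtree_nil T) pos_out Tp out_ev.
by exists h; rewrite // -(eq_evalAt _ (merge_vars tau sigma)).
Qed.

End TDD.

Theorem theorem7 (X : finType) (f : assign X -> bool) (T : vtree X)
    (C : ntdd) :
  vtree_over T -> respects T C -> is_tdd T C -> computes T C f ->
  forall (p : seq bool) (t : vtree X), subtree T p = Some t ->
    num_nontriv_subfun f (vars t) <= #|tnodes C p|.
Proof.
move=> [uniqT _] respTC tddTC compTCf p t Tp.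
pose subfun_of (h : node C) :=
  if [pick tau | evalAt t h tau] is Some tau then subfun f (vars t) tau
  else [ffun=> false].
apply: leq_trans _ (leq_imset_card subfun_of (tnodes C p)).
apply/subset_leq_card/subsetP => _ /imsetP[tau + ->].
rewrite inE => /existsP[sigma]; rewrite ffunE => f_sigma.
have [h hp h_tau] := nontriv_subfun_tnode respTC compTCf Tp f_sigma.
apply/imsetP; exists h; first by rewrite inE hp.
rewrite /subfun_of.
case: pickP => [tau' h_tau'|/(_ tau)]; last by rewrite h_tau.
exact: (tnode_subfun_eq respTC uniqT tddTC compTCf Tp hp h_tau h_tau').
Qed.
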